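(* Let $1\le r\le n$, let $d_1,\dots,d_{n-r}$ be positive integers, let $J=(x_1^{d_1},\dots,x_{n-r}^{d_{n-r}})\subseteq S$, and let $D\ge l$. If $P$ is a $D$-exact cone decomposition of $N_{JF}$ with Macaulay constants $b_0,\dots,b_{n+1}$, then \[ b_r=d_1\cdots d_{n-r}\,m+D. \]
   Context: Standing notation. $S=\mathbb{K}[x_1,\dots,x_n]$ is standard graded, and $F=Se_1\oplus\cdots\oplus Se_m$ is a graded free module with $\deg(e_j)\ge0$ integers; $l=\max_j\deg(e_j)$. Monomials of $F$ are $x^\alpha e_j$ of degree $|\alpha|+\deg(e_j)$. $N_{JF}$ is the $\mathbb{K}$-span of the monomials of $F$ not in $JF$. Cones. For a homogeneous $h\in F$ and $u\subseteq\{x_1,\dots,x_n\}$, the cone $C(h,u)=h\,\mathbb{K}[u]$ has degree $\deg h$ and dimension $|u|$. A cone decomposition of a subspace $T\subseteq F$ is a finite set $P$ of cones with $T=\bigoplus_{C\in P}C$; $P^+=\{C\in P:\dim C>0\}$. $P$ is $q$-standard if (1) no $C\in P^+$ has $\deg C<q$, and (2) for every $C\in P^+$ and every integer $d$ with $q\le d\le\deg C$ there is $C'\in P$ with $\deg C'=d$ and $\dim C'\ge\dim C$. $P$ is $q$-exact if it is $q$-standard and distinct cones of $P^+$ have distinct degrees. The Macaulay constants of a $q$-exact $P$ are $b_k=\max(\{q\}\cup\{1+\deg C:C\in P,\ \dim C\ge k\})$ for $k=0,\dots,n+1$. *)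

From HB Require Import structures.
From mathcomp Require Import all_boot all_order all_algebra.
Set Implicit Arguments. Unset Strict Implicit. Unset Printing Implicit Defensive.
Import Order.TTheory GRing.Theory Num.Theory.

(* Exponent vectors of monomials of S = K[x_1..x_n] (variables indexed 0..n-1). *)
Definition expv (n : nat) := {ffun 'I_n -> nat}.

(* Monomials x^alpha e_j of F = S e_1 (+) ... (+) S e_m. *)
Definition fmon (n m : nat) := (expv n * 'I_m)%type.

(* Elements of F (with coefficients in K): coefficient functions on monomials,
   required to be finitely supported (see [finsupp]). *)
Definition Fel (K : fieldType) (n m : nat) := fmon n m -> K.

Definition finsupp (K : fieldType) n m (f : Fel K n m) : Prop :=
  exists s : seq (fmon n m), forall x, x \notin s -> f x = 0%R.

(* degree of the monomial x^alpha e_j, given the degrees deg(e_j) *)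
Definition mdeg n m (dege : 'I_m -> nat) (x : fmon n m) : nat :=
  (\sum_(i < n) x.1 i + dege x.2)%N.

Definition monfn (K : fieldType) n m (x : fmon n m) : Fel K n m :=
  fun y => if y == x then 1%R else 0%R.

(* multiplication of f in F by the monomial x^beta of S *)
Definition mulmon (K : fieldType) n m (beta : expv n) (f : Fel K n m) : Fel K n m :=
  fun y => if [forall i, beta i <= y.1 i] then f ([ffun i => y.1 i - beta i], y.2)
           else 0%R.

(* x_{i+1}^{d_i} for i < n - r, as an exponent vector *)
Definition xpow n r (d : 'I_(n - r) -> nat) (i : 'I_(n - r)) : expv n :=
  [ffun k : 'I_n => if val k == val i then d i else 0%N].

(* membership in the submodule JF, J = (x_1^{d_1},...,x_{n-r}^{d_{n-r}}) *)
Definition inJF (K : fieldType) n m r (d : 'I_(n - r) -> nat) (f : Fel K n m) : Prop :=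
  exists fs : 'I_(n - r) -> Fel K n m,
    (forall i, finsupp (fs i)) /\
    forall x, f x = (\sum_(i < n - r) mulmon (xpow d i) (fs i) x)%R.

(* N_{JF}: the K-span of the monomials of F not in JF *)
Definition NJF (K : fieldType) n m r (d : 'I_(n - r) -> nat) (f : Fel K n m) : Prop :=
  finsupp f /\ forall x, f x != 0%R -> ~ inJF d (monfn K x).

(* A cone C(h,u): h homogeneous of degree cdeg, u a set of variables. *)
Record cone (K : fieldType) n m := Cone {
  ch : Fel K n m;
  cu : {set 'I_n};
  cdeg : nat }.

Definition cdim K n m (c : cone K n m) : nat := #|cu c|.

Definition cone_valid K n m (dege : 'I_m -> nat) (c : cone K n m) : Prop :=
  finsupp (ch c) /\ (exists x, ch c x != 0%R) /\
  forall x, ch c x != 0%R -> mdeg dege x = cdeg c.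

(* the set h K[u] : K-linear combinations of x^alpha h, supp alpha in u *)
Definition cone_set K n m (c : cone K n m) (g : Fel K n m) : Prop :=
  exists s : seq (expv n * K),
    (forall p, p \in s -> forall i, i \notin cu c -> p.1 i = 0%N) /\
    forall x, g x = (\sum_(p <- s) p.2 * mulmon p.1 (ch c) x)%R.

(* P = {P_0,...,P_{k-1}} is a cone decomposition of T : T = (+)_i P_i *)
Definition cone_decomp K n m (dege : 'I_m -> nat) (T : Fel K n m -> Prop)
    k (P : 'I_k -> cone K n m) : Prop :=
  [/\ forall i, cone_valid dege (P i),
      forall i g, cone_set (P i) g -> T g,
      forall t, T t -> exists g : 'I_k -> Fel K n m,
        (forall i, cone_set (P i) (g i)) /\ forall x, t x = (\sum_i g i x)%R
    & forall g : 'I_k -> Fel K n m, (forall i, cone_set (P i) (g i)) ->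
        (forall x, (\sum_i g i x)%R = 0%R) -> forall i x, g i x = 0%R].

Definition q_standard K n m k (P : 'I_k -> cone K n m) (q : nat) : Prop :=
  (forall i, 0 < cdim (P i) -> q <= cdeg (P i)) /\
  (forall i, 0 < cdim (P i) -> forall e, q <= e <= cdeg (P i) ->
     exists j, cdeg (P j) = e /\ cdim (P i) <= cdim (P j)).

Definition q_exact K n m k (P : 'I_k -> cone K n m) (q : nat) : Prop :=
  q_standard P q /\
  forall i j, i != j -> 0 < cdim (P i) -> 0 < cdim (P j) -> cdeg (P i) != cdeg (P j).

Definition macaulay K n m k (P : 'I_k -> cone K n m) (q j : nat) : nat :=
  maxn q (\max_(i < k | j <= cdim (P i)) (cdeg (P i)).+1).

(* The proof counts the standard monomials (those outside JF) of each degree t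
   in two ways.  They are the disjoint union of the m d_1 ... d_(n-r) cones
   x^b e_j K[x_(n-r+1), ..., x_n] of dimension r.  They also form a basis of the
   degree-t part of N_JF, which P splits as a direct sum; the degree-t part of a
   cone C(h, u) has the basis x^a h, |a| = t - deg h, supp a in u (independence
   by a leading-monomial argument).  Hence the Hilbert function of P equals that
   of m d_1 ... d_(n-r) cones of dimension r.  Comparing eventual finite
   differences shows that every cone of P has dimension at most r and exactly
   m d_1 ... d_(n-r) of them have dimension r.  Finally, in a q-exact
   decomposition the cones of dimension at least r > 0 have pairwise distinct
   degrees filling the interval [q, b_r), so b_r is q plus their number. *)

From HB Require Import structures.
From mathcomp Require Import all_boot all_order all_algebra zify.
Set Implicit Arguments. Unset Strict Implicit. Unset Printing Implicit Defensive.
Import GRing.Theory.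

(* [nmon s k] is the number of monomials of degree [k] in [s] variables. *)
Fixpoint nmon (s k : nat) : nat :=
  if s is s'.+1 then \sum_(i < k.+1) nmon s' (k - i) else nat_of_bool (k == 0).

(* [hf s a t] is the dimension of the degree-[t] part of a cone of dimension
   [s] generated in degree [a]: its Hilbert function. *)
Definition hf (s a t : nat) : nat := if a <= t then nmon s (t - a) else 0.

Lemma nmon0 s : nmon s 0 = 1.
Proof. by elim: s => //= s IH; rewrite big_ord1. Qed.

(* Pascal's rule: split off the monomials not divisible by the last variable. *)
Lemma nmonSS s k : nmon s.+1 k.+1 = nmon s k.+1 + nmon s.+1 k.
Proof. by rewrite [LHS]/= big_ord_recl subn0. Qed.

Lemma nmon_gt0 s k : 0 < s -> 0 < nmon s k.
Proof.
case: s => // s _; elim: k => [|k IH]; first by rewrite nmon0.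
by rewrite nmonSS ltn_addl.
Qed.

Lemma hfSS s a t : hf s.+1 a t.+1 = hf s.+1 a t + hf s a t.+1.
Proof.
rewrite /hf; case: (ltngtP a t.+1) => [lt|gt|->].
- by rewrite -ltnS lt subSn // nmonSS addnC.
- by rewrite leqNgt ltnW.
- by rewrite ltnn subnn !nmon0.
Qed.

Lemma hf0 a t : hf 0 a t = (t == a).
Proof.
rewrite /hf /=; case: leqP => [le|lt]; first by rewrite subn_eq0 eqn_leq le andbT.
by rewrite eq_sym eqn_leq leqNgt lt.
Qed.

Lemma hf1 a t : a <= t -> hf 1 a t = 1.
Proof. by rewrite /hf => ->; elim: (t - a) => [|k IH]; rewrite ?nmon0 // nmonSS IH. Qed.

Lemma hf_gt0 s a t : 0 < s -> a <= t -> 0 < hf s a t.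
Proof. by rewrite /hf => s0 ->; apply: nmon_gt0. Qed.

(* A family of cones is described by its list of (dimension, degree) pairs;
   [maxdeg L] is its largest degree. *)
Definition maxdeg (L : seq (nat * nat)) : nat := \max_(p <- L) p.2.

(* [hdiff L k t]: for large [t], the [k]-th finite difference of the Hilbert
   function of the family [L]; the cones of dimension below [k] are dropped. *)
Definition hdiff (L : seq (nat * nat)) (k t : nat) : nat :=
  \sum_(p <- L | k <= p.1) hf (p.1 - k) p.2 t.

Definition eventually (P : nat -> Prop) : Prop := exists T, forall t, T <= t -> P t.

Lemma hdiff_high L k t : maxdeg L < t ->
  hdiff L k t = \sum_(p <- L | k < p.1) hf (p.1 - k) p.2 t.
Proof.
move=> ltt; rewrite /hdiff (bigID (fun p => k < p.1)) /= [X in _ + X]big1_seq ?addn0.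
  by apply: eq_bigl => p; rewrite andb_idl // => /ltnW.
move=> p /andP[/andP[kp]]; rewrite -leqNgt => pk pL.
have -> : p.1 - k = 0 by apply/eqP; rewrite subn_eq0.
have := leq_bigmax_seq (F := snd) p pL isT; rewrite hf0 -/(maxdeg L).
by move=> le; case: eqP => // eq; move: ltt; rewrite eq ltnNge le.
Qed.

Lemma hdiffS L k t : maxdeg L < t ->
  hdiff L k t.+1 = hdiff L k t + hdiff L k.+1 t.+1.
Proof.
move=> ltt; rewrite (hdiff_high k (leqW ltt)) hdiff_high // -big_split /=.
by apply: eq_bigr => p kp; rewrite -subnSK // hfSS.
Qed.

Lemma hdiff_eventually L L' k :
  eventually (fun t => hdiff L k t = hdiff L' k t) ->
  eventually (fun t => hdiff L k.+1 t = hdiff L' k.+1 t).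
Proof.
case=> T eqT; exists (T + maxdeg L + maxdeg L').+2 => -[|t] tT; first by [].
have := eqT t.+1 ltac:(lia).
rewrite (hdiffS (L := L) k) ?(hdiffS (L := L') k) ?eqT; try lia; exact: addnI.
Qed.

Lemma hdiff_top L k t : all (fun p => p.1 <= k.+1) L -> maxdeg L < t ->
  hdiff L k t = count (fun p => p.1 == k.+1) L.
Proof.
move=> /allP top ltt; rewrite hdiff_high // -sum1_count big_seq_cond [RHS]big_seq_cond.
apply: eq_big => [p|p /andP[pL kp]].
  by case pL: (p \in L) => //=; have := top p pL; lia.
have -> : p.1 = k.+1 by apply/eqP; rewrite eqn_leq top.
rewrite subSnn hf1 //; apply: leq_trans (ltnW ltt); exact: leq_bigmax_seq.
Qed.

Lemma leq_hdiff L k t p : p \in L -> k <= p.1 -> hf (p.1 - k) p.2 t <= hdiff L k t.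
Proof. by move=> pL kp; rewrite /hdiff (big_rem p pL) kp leq_addr. Qed.

(* If a family of cones has the Hilbert function of a family of cones of
   dimension [r], then its cones have dimension at most [r], and it has as
   many cones of dimension [r]: compare the eventual finite differences. *)
Lemma hilbert_compare (L : seq (nat * nat)) (R : seq nat) r : 0 < r ->
  (forall t, \sum_(p <- L) hf p.1 p.2 t = \sum_(a <- R) hf r a t) ->
  all (fun p => p.1 <= r) L /\ count (fun p => p.1 == r) L = size R.
Proof.
move=> r0 eqL; set L' := [seq (r, a) | a <- R].
have eqd k : eventually (fun t => hdiff L k t = hdiff L' k t).
  elim: k => [|k]; last exact: hdiff_eventually.
  exists 0 => t _; rewrite /hdiff big_map.
  by under eq_bigr do rewrite subn0; under [RHS]eq_bigr do rewrite subn0.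
have topL' : all (fun p => p.1 <= r) L' by apply/allP => p /mapP[a _ ->].
have topL : all (fun p => p.1 <= r) L.
  apply/allP => p pL; rewrite leqNgt; apply/negP => rp.
  have [T eqT] := eqd r; pose t := (T + maxdeg L' + p.2).+1.
  have := leq_hdiff t pL (ltnW rp); rewrite eqT; last by rewrite /t; lia.
  rewrite hdiff_top; [|by apply: sub_all topL' => q /= /leqW|by rewrite /t; lia].
  rewrite count_map (@eq_count _ _ pred0) ?count_pred0 => [|a]; last exact: ltn_eqF.
  by rewrite leqNgt hf_gt0 ?subn_gt0 // leqW // leq_addl.
split=> //; have [T eqT] := eqd r.-1; pose t := (T + maxdeg L + maxdeg L').+1.
have := eqT t ltac:(rewrite /t; lia); rewrite !hdiff_top ?prednK // /t; try lia.
by move=> ->; rewrite count_map -[RHS]count_predT; apply: eq_count => a /=; rewrite eqxx.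
Qed.

(* In a [q]-exact decomposition, the cones of dimension at least [j > 0] have
   pairwise distinct degrees, and these degrees fill the interval [[q, b_j)]
   (the standard condition applied to a cone of maximal degree); hence the
   Macaulay constant [b_j] is [q] plus the number of these cones. *)
Lemma macaulay_exact K n m k (P : 'I_k -> cone K n m) q j :
  q_exact P q -> 0 < j ->
  macaulay P q j = q + #|[pred i | j <= cdim (P i)]|.
Proof.
move=> [[degq fill] distinct] j0; set A := [pred i | j <= cdim (P i)].
have posA i : A i -> 0 < cdim (P i) by apply: leq_trans.
rewrite /macaulay; case: (pickP A) => [i0 Ai0|A0]; last first.
  by rewrite big_pred0 // maxn0 (eq_card0 A0) addn0.
rewrite (bigmax_eq_arg i0) //; case: arg_maxnP => // imax Aimax maxF.
set e := cdeg (P imax); have qe : q <= e by apply: degq; apply: posA.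
set degs := image (fun i => cdeg (P i)) A.
have uniq_degs : uniq degs.
  rewrite map_inj_in_uniq ?enum_uniq // => i i'; rewrite !mem_enum => Ai Ai' eq.
  case: (eqVneq i i') => // ne.
  by move: (distinct i i' ne (posA _ Ai) (posA _ Ai')); rewrite eq eqxx.
have degs_interval : degs =i iota q (e.+1 - q).
  move=> x; rewrite mem_iota (subnKC (leqW qe)) ltnS; apply/mapP/idP.
    case=> i; rewrite mem_enum => Ai ->.
    by apply/andP; split; [apply: degq; apply: posA | apply: maxF].
  move=> qxe; have [i [<- dimi]] := fill imax (posA _ Aimax) x qxe.
  by exists i => //; rewrite mem_enum; apply: leq_trans dimi.
rewrite -(size_image (fun i => cdeg (P i))) -/degs.
by rewrite (perm_size (uniq_perm uniq_degs (iota_uniq _ _) degs_interval)) size_iota; lia.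
Qed.

Section ExponentVectors.
Variable n : nat.
Implicit Types (a b c : expv n) (u : seq 'I_n).

Definition vzero : expv n := [ffun => 0].
Definition vadd a b : expv n := [ffun i => a i + b i].
Definition vunit (i : 'I_n) (x : nat) : expv n := [ffun j => if j == i then x else 0].
Definition vdrop a (i : 'I_n) : expv n := [ffun j => if j == i then 0 else a j].
Definition vsum a : nat := \sum_(i < n) a i.

Lemma vsum_add a b : vsum (vadd a b) = vsum a + vsum b.
Proof. by rewrite /vsum -big_split; apply: eq_bigr => i _; rewrite ffunE. Qed.

Lemma vsum_unit i x : vsum (vunit i x) = x.
Proof.
rewrite /vsum (bigD1 i) //= big1 ?ffunE ?eqxx ?addn0 // => j /negPf ji.
by rewrite ffunE ji.
Qed.

Lemma vsum0 : vsum vzero = 0.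
Proof. by rewrite /vsum big1 // => i _; rewrite ffunE. Qed.

Lemma le_vsum a i : a i <= vsum a.
Proof. by rewrite /vsum (bigD1 i) //= leq_addr. Qed.

Lemma vsum_sub a b : (forall i, a i <= b i) ->
  vsum [ffun i => b i - a i] + vsum a = vsum b.
Proof. by move=> le; rewrite -vsum_add; congr vsum; apply/ffunP => i; rewrite !ffunE subnK. Qed.

Lemma vsplit a i : a = vadd (vunit i (a i)) (vdrop a i).
Proof. by apply/ffunP => j; rewrite !ffunE; case: eqP => [->|]; rewrite ?addn0. Qed.

Lemma vdrop_supp a i u : (forall j, j \notin i :: u -> a j = 0) ->
  forall j, j \notin u -> vdrop a i j = 0.
Proof.
move=> supp j ju; rewrite ffunE; case: eqP => // /eqP ji.
by apply: supp; rewrite inE negb_or ji.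
Qed.

Lemma vadd_unit_inj i x y b c : b i = 0 -> c i = 0 ->
  vadd (vunit i x) b = vadd (vunit i y) c -> x = y /\ b = c.
Proof.
move=> bi ci e; have := congr1 (fun f : expv n => f i) e.
rewrite !ffunE eqxx bi ci !addn0 => exy; split=> //; apply/ffunP => j.
by have := congr1 (fun f : expv n => f j) e; rewrite !ffunE exy => /addnI.
Qed.

Fixpoint vecs u k : seq (expv n) :=
  if u is i :: u' then
    [seq vadd (vunit i x) b | x <- iota 0 k.+1, b <- vecs u' (k - x)]
  else if k == 0 then [:: vzero] else [::].

Lemma size_vecs u k : size (vecs u k) = nmon (size u) k.
Proof.
elim: u k => [|i u IH] k; first by case: k.
rewrite size_allpairs_dep sumnE big_map -[iota 0 k.+1]/(index_iota 0 k.+1) big_mkord.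
by apply: eq_bigr => j _; rewrite IH.
Qed.

Lemma vecs_supp u k a : a \in vecs u k ->
  (forall i, i \notin u -> a i = 0) /\ vsum a = k.
Proof.
elim: u k a => [|i u IH] k a.
  rewrite /=; case: eqP => // -> /[1!inE] /eqP ->.
  by rewrite vsum0; split=> // i; rewrite ffunE.
case/allpairsPdep => x [b [/[1!mem_iota] xk /IH[supp sb] ->]].
split; last by rewrite vsum_add vsum_unit sb; lia.
move=> j; rewrite inE negb_or => /andP[/negPf ji ju].
by rewrite !ffunE ji supp.
Qed.

Lemma mem_vecs u k a : uniq u -> (forall i, i \notin u -> a i = 0) -> vsum a = k ->
  a \in vecs u k.
Proof.
elim: u k a => [|i u IH] k a.
  move=> _ supp <-; have -> : a = vzero by apply/ffunP => i; rewrite ffunE supp.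
  by rewrite vsum0 inE.
case/andP => iu uu supp sa; rewrite (vsplit a i).
apply/allpairsPdep; exists (a i), (vdrop a i); split=> //.
  by rewrite mem_iota add0n ltnS -sa le_vsum.
apply: IH => //; first exact: vdrop_supp.
by move: sa; rewrite {1}(vsplit a i) vsum_add vsum_unit => <-; rewrite addKn.
Qed.

Lemma vecs_uniq u k : uniq u -> uniq (vecs u k).
Proof.
elim: u k => [|i u IH] k; first by rewrite /=; case: (k == 0).
case/andP => iu uu; apply: allpairs_uniq_dep => [|x _|]; [exact: iota_uniq|exact: IH|].
move=> [x b] [y c] /allpairsPdep[x1 [b1 [_ hb1 [-> ->]]]].
move=> /allpairsPdep[x2 [b2 [_ hb2 [-> ->]]]] /= e.
have [[s1 _] [s2 _]] := (vecs_supp hb1, vecs_supp hb2).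
by have [-> ->] := vadd_unit_inj (s1 _ iu) (s2 _ iu) e.
Qed.

Variable bnd : 'I_n -> nat.

Fixpoint box u : seq (expv n) :=
  if u is i :: u' then [seq vadd (vunit i x) b | x <- iota 0 (bnd i), b <- box u']
  else [:: vzero].

Lemma size_box u : size (box u) = \prod_(i <- u) bnd i.
Proof.
elim: u => [|i u IH]; first by rewrite big_nil.
by rewrite size_allpairs size_iota IH big_cons.
Qed.

Lemma box_supp u a : uniq u -> a \in box u ->
  (forall i, i \notin u -> a i = 0) /\ (forall i, i \in u -> a i < bnd i).
Proof.
elim: u a => [|i u IH] a.
  by move=> _; rewrite inE => /eqP ->; split => // i _; rewrite ffunE.
case/andP => iu uu /allpairsP[[x b] [/= /[1!mem_iota] xi bb ->]].
have [supp lt] := IH _ uu bb.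
split=> j; rewrite inE ?negb_or !ffunE.
  by case/andP => /negPf -> /supp ->.
case: eqP => [-> _|_ /= ju]; last exact: lt.
by rewrite supp //; lia.
Qed.

Lemma mem_box u a : uniq u -> (forall i, i \notin u -> a i = 0) ->
  (forall i, i \in u -> a i < bnd i) -> a \in box u.
Proof.
elim: u a => [|i u IH] a.
  move=> _ supp _; have -> : a = vzero by apply/ffunP => i; rewrite ffunE supp.
  by rewrite inE.
case/andP => iu uu supp lt; rewrite (vsplit a i).
apply/allpairsP; exists (a i, vdrop a i); split => //=.
  by rewrite mem_iota /= add0n lt // inE eqxx.
apply: IH => //; first exact: vdrop_supp.
move=> j ju; rewrite ffunE; case: eqP => [ji|_]; first by rewrite -ji ju in iu.
by apply: lt; rewrite inE ju orbT.
Qed.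

Lemma box_uniq u : uniq u -> uniq (box u).
Proof.
elim: u => [|i u IH] //; case/andP => iu uu.
apply: allpairs_uniq; [exact: iota_uniq|exact: IH|].
move=> [x b] [y c] /allpairsP[[x1 b1] [_ /= hb1 [-> ->]]].
move=> /allpairsP[[x2 b2] [_ /= hb2 [-> ->]]] /= e.
have [[s1 _] [s2 _]] := (box_supp uu hb1, box_supp uu hb2).
by have [-> ->] := vadd_unit_inj (s1 _ iu) (s2 _ iu) e.
Qed.

End ExponentVectors.

Lemma mulmon_monfn (K : fieldType) n m (beta : expv n) (z : fmon n m) :
  mulmon beta (monfn K z) =1 monfn K (vadd beta z.1, z.2).
Proof.
case: z => c j' [a j]; rewrite /mulmon /monfn /=.
case: (boolP [forall i, beta i <= a i]) => [/forallP le|/forallPn[i]].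
  congr (if _ then _ else _); rewrite !xpair_eqE; congr andb.
  apply/eqP/eqP => [<-|->]; apply/ffunP => i; rewrite !ffunE ?addKn // subnKC //.
rewrite -ltnNge => lt; case: ifP => // /andP[/eqP /= e _].
by move: lt; rewrite e ffunE ltnNge leq_addr.
Qed.

(* The membership hypotheses delivered by [allpairs_uniq_dep]. *)
Lemma mem_allpairs_tagged (S T : eqType) (s : seq S) (t : S -> seq T) x y :
  @Tagged S x (fun=> T) y \in [seq @Tagged S x' (fun=> T) y' | x' <- s, y' <- t x'] ->
  x \in s /\ y \in t x.
Proof.
case/allpairsPdep => x' [y' [xs yt e]].
have /= ex := congr1 tag e; have /= ey := congr1 (@tagged S (fun=> T)) e.
by rewrite ex ey.
Qed.

Section StandardMonomials.
Variables (K : fieldType) (n m : nat) (dege : 'I_m -> nat) (r : nat).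
Variable d : 'I_(n - r) -> nat.

(* The exponent of [x_(k+1)] in a monomial outside [JF] is below [bnd k]
   (for [k >= n - r] the value of [bnd k] is irrelevant). *)
Definition bnd (k : 'I_n) : nat :=
  if (insub (val k) : option 'I_(n - r)) is Some i then d i else 1.

Lemma bnd_ord (k : 'I_n) (i : 'I_(n - r)) : val k = val i -> bnd k = d i.
Proof.
rewrite /bnd => e; case: insubP => [i' _ e'|]; last by rewrite e ltn_ord.
by congr d; apply: val_inj; rewrite e' e.
Qed.

Definition standard (z : fmon n m) : bool :=
  [forall k : 'I_n, (k < n - r) ==> (z.1 k < bnd k)].

Lemma standard_notJF z : standard z -> ~ inJF d (monfn K z).
Proof.
move=> sz [fs [_ /(_ z)]]; rewrite /monfn eqxx big1 => [/eqP|i _]; first by rewrite oner_eq0.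
rewrite /mulmon ifF //; apply/negbTE/forallPn.
exists (widen_ord (leq_subr r n) i); rewrite /xpow ffunE eqxx -ltnNge.
have := forallP sz (widen_ord (leq_subr r n) i); rewrite /= ltn_ord /=.
by rewrite (@bnd_ord _ i).
Qed.

Lemma nonstandard_JF z : ~~ standard z -> inJF d (monfn K z).
Proof.
case/forallPn => k; rewrite negb_imply -leqNgt => /andP[kr].
set i := Ordinal kr; rewrite (@bnd_ord k i) // => dz.
have le l : xpow d i l <= z.1 l.
  by rewrite /xpow ffunE; case: eqP => // e; rewrite (_ : l = k) //; apply: val_inj.
pose z' : fmon n m := ([ffun l => z.1 l - xpow d i l], z.2).
exists (fun i' => if i' == i then monfn K z' else fun=> 0%R); split.
  by move=> i'; case: eqP => _; [exists [:: z'] => x; rewrite inE /monfn => /negPf ->|exists [::]].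
move=> x; rewrite (bigD1 i) //= big1 ?addr0 => [|i' /negPf ne]; last first.
  by rewrite /mulmon ne; case: ifP.
rewrite eqxx mulmon_monfn /z'; congr (monfn K _ x); clear z'; case: z dz le => [a j] /= _ le.
suff -> : vadd (xpow d i) [ffun l => a l - xpow d i l] = a by [].
by apply/ffunP => l; have := le l; rewrite !ffunE => /subnKC.
Qed.

Lemma NJF_standard (f : Fel K n m) x : NJF d f -> f x != 0%R -> standard x.
Proof. by case=> _ nJ fx; apply/negPn/negP => /nonstandard_JF; apply: nJ. Qed.

Lemma NJF_monfn z : standard z -> NJF d (monfn K z).
Proof.
move=> sz; split; first by exists [:: z] => x; rewrite inE /monfn => /negPf ->.
move=> x; case: (eqVneq x z) => [-> _|ne]; first exact: standard_notJF.
by rewrite /monfn (negPf ne) eqxx.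
Qed.

Definition bvars : seq 'I_n := [seq k : 'I_n <- enum 'I_n | k < n - r].
Definition fvars : seq 'I_n := [seq k : 'I_n <- enum 'I_n | n - r <= k].

Lemma bvars_uniq : uniq bvars. Proof. by rewrite filter_uniq ?enum_uniq. Qed.
Lemma fvars_uniq : uniq fvars. Proof. by rewrite filter_uniq ?enum_uniq. Qed.
Lemma mem_bvars k : (k \in bvars) = (k < n - r).
Proof. by rewrite mem_filter mem_enum andbT. Qed.
Lemma mem_fvars k : (k \in fvars) = (n - r <= k).
Proof. by rewrite mem_filter mem_enum andbT. Qed.

Lemma big_bvars (R : Type) (idx : R) (op : Monoid.com_law idx) (F : 'I_n -> R) :
  \big[op/idx]_(k <- bvars) F k = \big[op/idx]_(i < n - r) F (widen_ord (leq_subr r n) i).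
Proof.
rewrite big_filter big_enum_cond (eq_bigl (fun k : 'I_n => true && (k < n - r))) //.
exact: big_ord_narrow_cond.
Qed.

Lemma size_fvars : r <= n -> size fvars = r.
Proof.
move=> rn; have := count_predC (fun k : 'I_n => k < n - r) (enum 'I_n).
have -> : count (fun k : 'I_n => k < n - r) (enum 'I_n) = n - r.
  by rewrite -size_filter -sum1_size big_bvars sum1_card card_ord.
rewrite size_enum_ord size_filter (@eq_count _ _ (predC (fun k : 'I_n => k < n - r))).
  by lia.
by move=> k; rewrite /= leqNgt.
Qed.

Definition std_exps t (j : 'I_m) : seq (expv n) :=
  [seq vadd b c | b <- box bnd bvars,
     c <- if dege j + vsum b <= t then vecs fvars (t - (dege j + vsum b)) else [::]].

(* The standard monomials of degree [t]: a basis of the degree-[t] part of N_JF. *)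
Definition std t : seq (fmon n m) := [seq (a, j) | j <- enum 'I_m, a <- std_exps t j].

(* The degrees of the [x^b e_j], [b] in the box: N_JF is the direct sum of
   the [r]-dimensional cones [x^b e_j K[x_(n-r+1), ..., x_n]]. *)
Definition gen_degs : seq nat := [seq dege j + vsum b | j <- enum 'I_m, b <- box bnd bvars].

Lemma size_gen_degs : size gen_degs = m * \prod_(i < n - r) d i.
Proof.
rewrite size_allpairs size_enum_ord size_box big_bvars; congr (_ * _).
by apply: eq_bigr => i _; apply: bnd_ord.
Qed.

Lemma size_std t : r <= n -> size (std t) = \sum_(a <- gen_degs) hf r a t.
Proof.
move=> rn; rewrite size_allpairs_dep big_allpairs_dep sumnE big_map.
apply: eq_bigr => j _; rewrite size_allpairs_dep sumnE big_map.
by apply: eq_bigr => b _; rewrite /hf; case: ifP => // _; rewrite size_vecs size_fvars.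
Qed.

Lemma vsplit_bounded (a : expv n) :
  a = vadd [ffun k : 'I_n => if k < n - r then a k else 0]
           [ffun k : 'I_n => if k < n - r then 0 else a k].
Proof. by apply/ffunP => k; rewrite !ffunE; case: ifP; rewrite ?addn0. Qed.

Lemma mem_std t z : (z \in std t) = standard z && (mdeg dege z == t).
Proof.
apply/idP/idP.
  case/allpairsPdep => j [_ [_ /allpairsPdep[b [c [bb + ->]]] ->]].
  case: ifP => // tb /vecs_supp[cs sc].
  have [bs bbnd] := box_supp bvars_uniq bb.
  apply/andP; split.
    apply/forallP => k /=; apply/implyP => kr.
    by rewrite ffunE cs ?addn0 ?bbnd ?mem_bvars // mem_fvars -ltnNge.
  by rewrite /mdeg /= -/(vsum _) vsum_add sc; apply/eqP; lia.
case: z => a j /andP[sz /eqP /= dz]; apply/allpairsPdep; exists j, a.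
split=> //; first by rewrite mem_enum.
have ea := vsplit_bounded a; set b := [ffun _ => _] in ea; set c := [ffun _ => _] in ea.
have sa : vsum a = vsum b + vsum c by rewrite {1}ea vsum_add.
apply/allpairsPdep; exists b, c; split=> //.
  apply: mem_box bvars_uniq _ _ => k; rewrite mem_bvars ffunE; first by move/negPf ->.
  by move=> kr; rewrite kr; move/forallP/(_ k): sz; rewrite kr.
have {}dz : vsum b + vsum c + dege j = t by rewrite -sa.
rewrite ifT; last by lia.
apply: mem_vecs fvars_uniq _ _ => [k|]; first by rewrite mem_fvars ffunE -ltnNge => ->.
lia.
Qed.

Lemma std_uniq t : uniq (std t).
Proof.
apply: allpairs_uniq_dep => [|j _|]; first exact: enum_uniq; last first.
  by move=> [j a] [j' a'] _ _ /= [-> ->].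
apply: allpairs_uniq_dep => [|b _|]; first exact: box_uniq bvars_uniq.
  by case: ifP => // _; apply: vecs_uniq fvars_uniq.
move=> [b c] [b' c'] /mem_allpairs_tagged[bb] + /mem_allpairs_tagged[bb'] /=.
case: ifP => // _ /vecs_supp[cs _]; case: ifP => // _ /vecs_supp[cs' _] e.
have [[bs _] [bs' _]] := (box_supp bvars_uniq bb, box_supp bvars_uniq bb').
have eb : b = b'.
  apply/ffunP => k; have := congr1 (fun f : expv n => f k) e; rewrite !ffunE.
  case: (ltnP k (n - r)) => kr; first by rewrite cs ?cs' ?mem_fvars -?ltnNge // !addn0.
  by rewrite bs ?bs' ?mem_bvars -?leqNgt.
rewrite -{}eb in e *; suff -> : c = c' by [].
apply/ffunP => k; have := congr1 (fun f : expv n => f k) e.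
by rewrite !ffunE => /addnI.
Qed.

End StandardMonomials.

Section ConeGenerators.
Variables (K : fieldType) (n m : nat) (dege : 'I_m -> nat).
Implicit Types (c : cone K n m) (a : expv n).

Definition gens c t : seq (expv n) :=
  if cdeg c <= t then vecs (enum (cu c)) (t - cdeg c) else [::].

Lemma size_gens c t : size (gens c t) = hf (cdim c) (cdeg c) t.
Proof. by rewrite /gens /hf; case: ifP => // _; rewrite size_vecs -cardE. Qed.

Lemma gens_supp c t a : a \in gens c t ->
  (forall i, i \notin cu c -> a i = 0) /\ vsum a + cdeg c = t.
Proof.
rewrite /gens; case: ifP => // le /vecs_supp[supp sa]; split; last by lia.
by move=> i; rewrite -mem_enum; apply: supp.
Qed.

Lemma mem_gens c t a : (forall i, i \notin cu c -> a i = 0) -> vsum a + cdeg c = t ->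
  a \in gens c t.
Proof.
move=> supp sa; rewrite /gens ifT; last by lia.
by apply: mem_vecs (enum_uniq _) _ _ => [i|]; [rewrite mem_enum; apply: supp|lia].
Qed.

Lemma gens_uniq c t : uniq (gens c t).
Proof. by rewrite /gens; case: ifP => // _; apply/vecs_uniq/enum_uniq. Qed.

Lemma mulmon_hom c a x : cone_valid dege c ->
  mulmon a (ch c) x != 0%R -> mdeg dege x = vsum a + cdeg c.
Proof.
case=> _ [_ hom]; rewrite /mulmon; case: ifP => [/forallP le /hom|]; last by rewrite eqxx.
rewrite /mdeg /= => <-; rewrite -[\sum_(i < n) x.1 i](vsum_sub le) -/(vsum _).
by rewrite [vsum _ + vsum a]addnC -addnA.
Qed.

Lemma cone_set_mulmon c a : (forall i, i \notin cu c -> a i = 0) ->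
  cone_set c (mulmon a (ch c)).
Proof.
move=> supp; exists [:: (a, 1%R)]; split; first by move=> p /[1!inE] /eqP -> i /supp.
by move=> x; rewrite big_seq1 /= mul1r.
Qed.
End ConeGenerators.

Lemma sum_base_inj B n (F G : 'I_n -> nat) : (forall i, F i < B) -> (forall i, G i < B) ->
  \sum_(i < n) F i * B ^ i = \sum_(i < n) G i * B ^ i -> F =1 G.
Proof.
elim: n F G => [|n IH] F G ltF ltG e i; first by case: i.
have shift (X : 'I_n.+1 -> nat) : \sum_(i < n) X (lift ord0 i) * B ^ (bump 0 i)
    = B * \sum_(i < n) X (lift ord0 i) * B ^ i.
  by rewrite big_distrr; apply: eq_bigr => j _; rewrite /bump /= add1n expnS mulnCA.
move: e; rewrite !big_ord_recl /= !expn0 !muln1 !shift => e.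
have B0 : 0 < B by apply: leq_trans (ltF ord0).
have e0 : F ord0 = G ord0.
  have := congr1 (modn^~ B) e; rewrite /= ![_ + B * _]addnC ![B * _]mulnC.
  by rewrite !modnMDl !modn_small.
move: e; rewrite e0 => /addnI/eqP; rewrite eqn_pmul2l // => /eqP e.
have {}IH := IH _ _ (fun j => ltF (lift ord0 j)) (fun j => ltG (lift ord0 j)) e.
by case: (unliftP ord0 i) => [j ->|->].
Qed.

Section Weights.
Variable n : nat.
Implicit Types (a b : expv n).

(* The weight of an exponent vector in base [B]: for vectors with entries
   below [B] it is injective and additive, i.e. a monomial order. *)
Definition wt (B : nat) a : nat := \sum_(i < n) a i * B ^ i.

Lemma wt_add B a b : wt B (vadd a b) = wt B a + wt B b.
Proof. by rewrite /wt -big_split; apply: eq_bigr => i _; rewrite ffunE mulnDl. Qed.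

Lemma wt_sub B a b : (forall i, a i <= b i) -> wt B [ffun i => b i - a i] + wt B a = wt B b.
Proof. by move=> le; rewrite -wt_add; congr wt; apply/ffunP => i; rewrite !ffunE subnK. Qed.

Lemma wt_inj B a b : (forall i, a i < B) -> (forall i, b i < B) -> wt B a = wt B b -> a = b.
Proof. by move=> ltA ltB e; apply/ffunP; apply: sum_base_inj ltA ltB e. Qed.
End Weights.

Lemma seq_argmax (T : eqType) (s : seq T) (p : pred T) (f : T -> nat) :
  has p s -> exists2 y, (y \in s) && p y & forall z, z \in s -> p z -> f z <= f y.
Proof.
elim: s => [|x s IH] //= hx; case: (boolP (has p s)) => hs; last first.
  have px : p x by move: hx; rewrite (negbTE hs) orbF.
  exists x; first by rewrite inE eqxx px.
  by move=> z /[1!inE] /orP[/eqP ->|zs] pz //; case/hasP: hs; exists z.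
have [y /andP[ys py] ymax] := IH hs.
case: (boolP (p x && (f y < f x))) => [/andP[px lt]|nb].
  exists x; first by rewrite inE eqxx px.
  move=> z /[1!inE] /orP[/eqP ->|zs] pz //.
  exact: leq_trans (ymax z zs pz) (ltnW lt).
exists y; first by rewrite inE ys orbT py.
move=> z /[1!inE] /orP[/eqP ->|zs] pz; last exact: ymax.
by move: nb; rewrite pz /= -leqNgt.
Qed.

Section LeadingMonomials.
Variables (K : fieldType) (n m B : nat).
Implicit Types (h : Fel K n m) (a b : expv n) (y : fmon n m).

Definition leading h y : Prop :=
  h y != 0%R /\ forall x, h x != 0%R -> wt B x.1 <= wt B y.1.

Lemma exists_leading h : finsupp h -> (exists x, h x != 0%R) -> exists y, leading h y.
Proof.
case=> s supp [x hx].
have in_s z : h z != 0%R -> z \in s by move=> hz; apply: contraNT hz => /supp ->.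
have hs : has (fun y => h y != 0%R) s by apply/hasP; exists x; first exact: in_s.
have [y /andP[_ hy] ymax] := seq_argmax (fun y => wt B y.1) hs.
by exists y; split=> // z hz; apply: ymax (in_s z hz) hz.
Qed.

Lemma mulmon_shift h a y : mulmon a h (vadd a y.1, y.2) = h y.
Proof.
rewrite /mulmon ifT; last by apply/forallP => i; rewrite ffunE leq_addr.
by case: y => c j; congr (h (_, _)); apply/ffunP => i; rewrite !ffunE addKn.
Qed.

Lemma mulmon_below_leading h a b y : leading h y -> wt B b < wt B a ->
  mulmon b h (vadd a y.1, y.2) = 0%R.
Proof.
case=> _ ymax lt; rewrite /mulmon; case: ifP => // /forallP le.
have [//|/ymax /= hx] := eqVneq (h ([ffun i => vadd a y.1 i - b i], y.2)) 0%R.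
by have := wt_sub B le; rewrite /= wt_add; lia.
Qed.
End LeadingMonomials.

Section HilbertFunction.
Variables (K : fieldType) (n m : nat) (dege : 'I_m -> nat) (r : nat).
Variables (d : 'I_(n - r) -> nat) (k : nat) (P : 'I_k -> cone K n m).
Hypothesis decP : cone_decomp dege (NJF d) P.
Variable t : nat.

Local Notation G := (std dege d t).
Local Notation N := (size G).

Definition coords (f : Fel K n m) : 'rV[K]_N := \row_(j < N) f (tnth (in_tuple G) j).

Definition cone_vecs (c : cone K n m) : seq 'rV[K]_N :=
  [seq coords (mulmon a (ch c)) | a <- gens c t].
Definition cone_space (c : cone K n m) : {vspace 'rV[K]_N} := <<cone_vecs c>>%VS.

Lemma size_cone_vecs (c : cone K n m) : size (cone_vecs c) = size (gens c t).
Proof. exact: size_map. Qed.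

Lemma P_valid i : cone_valid dege (P i). Proof. by case: decP. Qed.
Lemma P_NJF i g : cone_set (P i) g -> NJF d g. Proof. by case: decP => _ sub _ _; apply: sub. Qed.

Lemma std_tnth (j : 'I_N) :
  standard d (tnth (in_tuple G) j) && (mdeg dege (tnth (in_tuple G) j) == t).
Proof. by rewrite -mem_std mem_tnth. Qed.

Lemma std_index z : z \in G -> exists j : 'I_N, z = tnth (in_tuple G) j.
Proof.
by move=> zG; exists (Ordinal (etrans (index_mem z G) zG)); rewrite (tnth_nth z) nth_index.
Qed.

Lemma coords_comb (c : cone K n m) (s : seq (expv n * K)) :
  coords (fun x => \sum_(p <- s) p.2 * mulmon p.1 (ch c) x)%R =
  (\sum_(p <- s) p.2 *: coords (mulmon p.1 (ch c)))%R.
Proof. by apply/rowP => j; rewrite mxE summxE; apply: eq_bigr => p _; rewrite !mxE. Qed.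

Lemma coords_off (c : cone K n m) a : cone_valid dege c ->
  vsum a + cdeg c != t -> coords (mulmon a (ch c)) = 0%R.
Proof.
move=> cv ne; apply/rowP => j; rewrite !mxE; apply/eqP; apply: contraNT ne => /(mulmon_hom cv).
by case/andP: (std_tnth j) => _ /eqP -> ->.
Qed.

Lemma coords_cone (c : cone K n m) g : cone_valid dege c -> cone_set c g ->
  coords g \in cone_space c.
Proof.
move=> cv [s [supp eg]].
have -> : coords g = coords (fun x => \sum_(p <- s) p.2 * mulmon p.1 (ch c) x)%R.
  by apply/rowP => j; rewrite !mxE eg.
rewrite coords_comb big_seq; apply: rpred_sum => p ps; apply: rpredZ.
have [e|ne] := eqVneq (vsum p.1 + cdeg c) t; last by rewrite coords_off ?mem0v.
by apply/memv_span/map_f/mem_gens => // i; apply: supp.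
Qed.

Definition gen_comb (c : cone K n m) (v : 'rV[K]_N) : seq (expv n * K) :=
  [seq (nth (vzero n) (gens c t) l, coord (in_tuple (cone_vecs c)) l v)
    | l : 'I_(size (cone_vecs c)) <- enum 'I_(size (cone_vecs c))].
Definition cone_elt (c : cone K n m) (v : 'rV[K]_N) : Fel K n m :=
  fun x => (\sum_(p <- gen_comb c v) p.2 * mulmon p.1 (ch c) x)%R.

Lemma gen_comb_supp (c : cone K n m) v p : p \in gen_comb c v ->
  (forall j, j \notin cu c -> p.1 j = 0) /\ vsum p.1 + cdeg c = t.
Proof. by case/mapP => l _ -> /=; apply/gens_supp/mem_nth; rewrite -size_cone_vecs. Qed.

Lemma cone_elt_set (c : cone K n m) v : cone_set c (cone_elt c v).
Proof. by exists (gen_comb c v); split=> // p /gen_comb_supp[]. Qed.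

Lemma coords_cone_elt (c : cone K n m) v : v \in cone_space c -> coords (cone_elt c v) = v.
Proof.
move=> vc; rewrite coords_comb big_map big_enum /=.
rewrite [RHS](coord_span (X := in_tuple (cone_vecs c)) vc).
by apply: eq_bigr => l _; rewrite (nth_map (vzero n)) // -size_cone_vecs.
Qed.

Lemma cone_elt_off i v x : x \notin G -> cone_elt (P i) v x = 0%R.
Proof.
move=> xG; apply: big1_seq => p /andP[_ /gen_comb_supp[supp deg]].
have [->|nz] := eqVneq (mulmon p.1 (ch (P i)) x) 0%R; first by rewrite mulr0.
move: xG; rewrite mem_std (mulmon_hom (P_valid i) nz) deg eqxx andbT.
by rewrite (NJF_standard (P_NJF (cone_set_mulmon supp)) nz).
Qed.

Lemma cone_spaces_full : (fullv <= \sum_(i < k) cone_space (P i))%VS.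
Proof.
apply/subvP => v _; rewrite (row_sum_delta v); apply: rpred_sum => j _; apply: rpredZ.
set z := tnth (in_tuple G) j; case/andP: (std_tnth j) => sz _.
case: decP => _ _ span _; have [g [gP gsum]] := span _ (NJF_monfn K sz).
have -> : ('e_j)%R = (\sum_(i < k) coords (g i))%R.
  apply/rowP => j'; rewrite !mxE summxE; under eq_bigr do rewrite mxE.
  rewrite -gsum /monfn /z !(tnth_nth z) /= nth_uniq ?std_uniq //.
  by rewrite -[j' == j]/(val j' == val j :> nat); case: eqP.
by apply: memv_sumr => i _; apply: coords_cone (P_valid i) (gP i).
Qed.

Lemma cone_spaces_direct : directv (\sum_(i < k) cone_space (P i)).
Proof.
apply/directv_sum_independent => v vP sum0 i0 _.
pose g i := cone_elt (P i) (v i).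
have gv i : coords (g i) = v i by apply/coords_cone_elt/vP.
have gsum x : (\sum_(i < k) g i x = 0)%R.
  have [/std_index[j ->]|xG] := boolP (x \in G); last by apply: big1 => i _; apply: cone_elt_off.
  have := congr1 (fun w : 'rV[K]_N => w ord0 j) sum0; rewrite /= summxE mxE => e.
  by rewrite -[RHS]e; apply: eq_bigr => i _; rewrite -gv mxE.
case: decP => _ _ _ indep; rewrite -gv; apply/rowP => j.
by rewrite !mxE (indep g (fun i => cone_elt_set _ _) gsum).
Qed.

(* The monomial generators of a cone are linearly independent: evaluate a
   vanishing combination at [x^a y], for [a] the heaviest generator with a
   nonzero coefficient and [y] a leading monomial of the cone's generator. *)
Lemma free_cone_vecs i : free (cone_vecs (P i)).
Proof.
set c := P i; set X := cone_vecs c; set A := gens c t; set B := t.+1.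
apply/(freeP (X := in_tuple X)) => co rel l0; case: (eqVneq (co l0) 0%R) => // co0.
have inA (l : 'I_(size X)) : nth (vzero n) A l \in A by apply: mem_nth; rewrite -size_cone_vecs.
have small b : b \in A -> forall q, b q < B.
  by case/gens_supp => _ deg q; rewrite ltnS -deg; apply/leq_trans/leq_addr/le_vsum.
case: (@arg_maxnP _ l0 (fun l => co l != 0%R) (fun l => wt B (nth (vzero n) A l))) => //.
move=> ls cls lsmax.
set a := nth (vzero n) A ls; have [supp deg] := gens_supp (inA ls).
case: (P_valid i) => fs [nz _]; have [y ylead] := exists_leading B fs nz.
set z : fmon n m := (vadd a y.1, y.2).
have az : mulmon a (ch c) z = ch c y by apply: mulmon_shift.
have zG : z \in G.
  have nzz : mulmon a (ch c) z != 0%R by rewrite az; case: ylead.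
  rewrite mem_std (mulmon_hom (P_valid i) nzz) deg eqxx andbT.
  exact: NJF_standard (P_NJF (cone_set_mulmon supp)) nzz.
have [j ej] := std_index zG.
have := congr1 (fun w : 'rV[K]_N => w ord0 j) rel; rewrite /= summxE mxE (bigD1 ls) //=.
rewrite big1 ?addr0 => [|l nl]; last first.
  rewrite mxE (nth_map (vzero n)) -?size_cone_vecs // mxE -ej.
  have [->|cl] := eqVneq (co l) 0%R; first by rewrite mul0r.
  suff lt : wt B (nth (vzero n) A l) < wt B a by rewrite (mulmon_below_leading ylead lt) mulr0.
  have le : wt B (nth (vzero n) A l) <= wt B a by apply: lsmax.
  rewrite ltn_neqAle le andbT; apply: contra nl => /eqP.
  move/(wt_inj (small _ (inA l)) (small _ (inA ls))).
  by move/eqP; rewrite nth_uniq ?gens_uniq -?size_cone_vecs.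
rewrite mxE (nth_map (vzero n)) -?size_cone_vecs // mxE -ej az => /eqP.
by rewrite mulf_eq0 (negbTE cls); case: ylead => /negbTE ->.
Qed.

Lemma hilbert_decomp : N = \sum_(i < k) hf (cdim (P i)) (cdeg (P i)) t.
Proof.
have full : (\sum_(i < k) cone_space (P i))%VS = fullv.
  by apply/eqP; rewrite eqEsubv subvf cone_spaces_full.
have dimN : \dim (fullv : {vspace 'rV[K]_N}) = N by rewrite dimvf /dim /= mul1n.
rewrite -dimN -full (directvP cone_spaces_direct) /=; apply: eq_bigr => i _.
by rewrite /cone_space (eqP (free_cone_vecs i)) size_cone_vecs size_gens.
Qed.
End HilbertFunction.

Unset Implicit Arguments.

Theorem corollary7p4 (K : fieldType) (n m : nat) (dege : 'I_m -> nat)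
    (r : nat) (d : 'I_(n - r) -> nat) (D : nat) (k : nat) (P : 'I_k -> cone K n m) :
  1 <= r <= n ->
  (forall i, 0 < d i) ->
  \max_(j < m) dege j <= D ->
  cone_decomp dege (NJF d) P ->
  q_exact P D ->
  macaulay P D r = (\prod_(i < n - r) d i) * m + D.
Proof.
move=> /andP[r1 rn] _ _ decP exP.
pose L := [seq (cdim (P i), cdeg (P i)) | i <- enum 'I_k].
have [dimL countL] :
    all (fun p => p.1 <= r) L /\ count (fun p => p.1 == r) L = size (gen_degs dege d).
  apply: hilbert_compare r1 _ => t.
  by rewrite -size_std // (hilbert_decomp decP t) big_map big_enum.
rewrite (macaulay_exact exP r1) addnC mulnC -(size_gen_degs dege) -countL; congr (_ + _).
rewrite count_map -size_filter cardE /enum_mem -filter_predI; apply/congr1/eq_filter => i /=.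
by rewrite eqn_leq andbC (allP dimL _ (map_f _ (mem_enum _ i))).
Qed.
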